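(* Let $(E,d)$ be a metric vector space over $K\in\{\mathbb R,\mathbb C,\mathbb H\}$ such that $d$ is $C_0$-translation invariant for some $C_0\ge0$. Then for all $x,y\in E$ the limit $\delta(x,y)=\lim_{n\to+\infty}\frac1n d(nx,ny)$ exists, and $\delta(x,y)\le d(x,y)+2C_0$.
   Context: A metric vector space is a topological vector space over $K$ whose topology is generated by the metric $d$. $d$ is $C_0$-translation invariant if $d(x+z,y+z)\le d(x,y)+C_0$ for all $x,y,z\in E$. *)

From HB Require Import structures.
From mathcomp Require Import all_boot all_order all_algebra.
From mathcomp Require Import all_classical all_reals all_analysis.
Set Implicit Arguments. Unset Strict Implicit. Unset Printing Implicit Defensive.
Import Order.TTheory GRing.Theory Num.Theory numFieldNormedType.Exports.
Local Open Scope classical_set_scope.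
Local Open Scope ring_scope.

Definition is_metric (R : realType) (E : Type) (d : E -> E -> R) : Prop :=
  [/\ forall x y, 0 <= d x y,
      forall x y, d x y = 0 <-> x = y,
      forall x y, d x y = d y x &
      forall x y z, d x z <= d x y + d y z].

Definition metric_generates_topology (R : realType) (E : topologicalType)
  (d : E -> E -> R) : Prop :=
  forall (x : E) (A : set E),
    nbhs x A <-> exists2 e : R, 0 < e & [set y | d x y < e] `<=` A.

Definition metric_vector_space (K : numFieldType) (R : realType)
  (E : topologicalLmodType K) (d : E -> E -> R) : Prop :=
  is_metric d /\ metric_generates_topology d.

Definition translation_invariant_up_to (R : realType) (E : zmodType)
  (d : E -> E -> R) (C0 : R) : Prop :=
  forall x y z : E, d (x + z) (y + z) <= d x y + C0.

From HB Require Import structures.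
From mathcomp Require Import all_boot all_order all_algebra.
From mathcomp Require Import all_classical all_reals all_analysis.
From mathcomp Require Import lra.

Set Implicit Arguments.
Unset Strict Implicit.
Unset Printing Implicit Defensive.
Import Order.TTheory GRing.Theory Num.Theory numFieldNormedType.Exports.
Local Open Scope classical_set_scope.
Local Open Scope ring_scope.

(* Translation invariance up to [C0] makes [b n := d (n x) (n y) + 2 C0]
   subadditive, so Fekete's lemma gives the convergence of [b n / n], hence of
   [d (n x) (n y) / n], to [inf_n b n / n <= b 1 = d x y + 2 C0]. *)

Lemma cvg_divn0 (R : archiRealFieldType) (c : R) : (fun n : nat => c / n%:R) @ \oo --> 0.
Proof.
rewrite -(mulr0 c); apply: cvgM; first exact: cvg_cst.
by rewrite -cvg_shiftS; exact: cvg_harmonic.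
Qed.

Section Fekete.
Variables (R : realType) (u : nat -> R).
Hypothesis u_ge0 : forall n, 0 <= u n.
Hypothesis u_subadd : forall m n, u (m + n) <= u m + u n.

Lemma subadd_mulnD q m r : u (q * m + r) <= q%:R * u m + u r.
Proof.
elim: q r => [|q IHq] r; first by rewrite mul0n add0n mul0r add0r.
rewrite mulSn -addnA mulrSr; apply: (le_trans (u_subadd _ _)).
by have := IHq r; lra.
Qed.

Lemma subadd_divn_le k n : (0 < k)%N -> (0 < n)%N ->
  u n / n%:R <= u k / k%:R + (k%:R * u 1 + u 0) / n%:R.
Proof.
move=> k_gt0 n_gt0; have n_pos : 0 < n%:R :> R by rewrite ltr0n.
have k_pos : 0 < k%:R :> R by rewrite ltr0n.
rewrite ler_pdivrMr // mulrDl divfK ?gt_eqF //.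
set q := (n %/ k)%N; set r := (n %% k)%N.
have u_n : u n <= q%:R * u k + (r%:R * u 1 + u 0).
  rewrite {1}(divn_eq n k); apply: (le_trans (subadd_mulnD _ _ _)).
  by rewrite lerD2l -[r in u r]addn0 -[r in u (r + _)]muln1 subadd_mulnD.
have r_le : r%:R * u 1 <= k%:R * u 1.
  by rewrite ler_wpM2r // ler_nat ltnW // ltn_pmod.
have qk_le : q%:R * u k <= u k / k%:R * n%:R.
  rewrite mulrAC ler_pdivlMr // -mulrA mulrC -mulrA ler_wpM2l // -natrM ler_nat.
  by rewrite mulnC leq_trunc_div.
lra.
Qed.

Definition subadd_rate := inf (range (fun n : nat => u n.+1 / n.+1%:R)).

Lemma subadd_rate_le k : (0 < k)%N -> subadd_rate <= u k / k%:R.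
Proof.
case: k => // k _; apply: ge_inf; last by exists k.
by exists 0 => _ [n _ <-]; rewrite divr_ge0.
Qed.

Theorem fekete : (fun n : nat => u n / n%:R) @ \oo --> subadd_rate.
Proof.
apply/cvgrPdist_le => eps eps_gt0.
have [_ [k _ <-] u_k] : exists2 z, range (fun n : nat => u n.+1 / n.+1%:R) z &
    z < subadd_rate + eps / 2.
  by apply: inf_lt; [exists (u 1 / 1%:R), 0%N | rewrite ltrDl divr_gt0].
have small : \forall n \near \oo, (k.+1%:R * u 1 + u 0) / n%:R < eps / 2.
  exact: cvgr_lt (cvg_divn0 _) _ (divr_gt0 eps_gt0 (ltr0Sn _ 1)).
near=> n; have n_gt0 : (0 < n)%N by near: n; exact: nbhs_infty_gt.
have lower := subadd_rate_le n_gt0.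
have upper := subadd_divn_le (ltn0Sn k) n_gt0.
have small_n : (k.+1%:R * u 1 + u 0) / n%:R < eps / 2 by near: n.
(* [lra] needs the quotients named to treat them as atoms. *)
move: lower upper u_k small_n.
set v_n := u n / n%:R; set v_k := u k.+1 / _; set err := _ / n%:R => *.
by rewrite ler_norml; apply/andP; split; lra.
Unshelve. all: end_near.
Qed.

End Fekete.

Lemma dist_addD (R : realType) (E : zmodType) (d : E -> E -> R) (C0 : R) :
  (forall x y z, d x z <= d x y + d y z) -> translation_invariant_up_to d C0 ->
  forall x y x' y', d (x + x') (y + y') <= d x y + d x' y' + 2 * C0.
Proof.
move=> d_triangle d_transl x y x' y'.
have := d_triangle (x + x') (y + x') (y + y').
have := d_transl x y x'; have := d_transl x' y' y.
by rewrite [x' + y]addrC [y' + y]addrC; lra.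
Qed.

Theorem proposition1 (K : numFieldType) (R : realType)
  (E : topologicalLmodType K) (d : E -> E -> R) (C0 : R) :
  metric_vector_space d ->
  0 <= C0 ->
  translation_invariant_up_to d C0 ->
  forall x y : E,
    cvg ((fun n : nat => d (x *+ n) (y *+ n) / n%:R) @ \oo) /\
    lim ((fun n : nat => d (x *+ n) (y *+ n) / n%:R) @ \oo) <= d x y + 2 * C0.
Proof.
move=> [[d_ge0 _ _ d_triangle] _] C0_ge0 d_transl x y.
pose b n := d (x *+ n) (y *+ n) + 2 * C0.
have b_ge0 n : 0 <= b n by rewrite addr_ge0 // mulr_ge0.
have b_subadd m n : b (m + n)%N <= b m + b n.
  have := dist_addD d_triangle d_transl (x *+ m) (y *+ m) (x *+ n) (y *+ n).
  by rewrite /b !mulrnDr; lra.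
have cvg_d : (fun n : nat => d (x *+ n) (y *+ n) / n%:R) @ \oo
    --> subadd_rate b.
  rewrite -[subadd_rate b]subr0.
  under eq_fun => n do rewrite -[d _ _](addrK (2 * C0)) mulrBl.
  exact: cvgB (fekete b_ge0 b_subadd) (cvg_divn0 _).
split; first exact: cvgP cvg_d.
rewrite (cvg_lim _ cvg_d) //.
by have := subadd_rate_le b_ge0 (ltn0Sn 0); rewrite divr1.
Qed.
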